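(* Let $\mathfrak{g}$ be a simply laced semisimple Lie algebra with weight lattice $P$ and $P_{\mathbb{Q}}=P\otimes_{\mathbb{Z}}\mathbb{Q}$, and let $\hat{\mathcal{O}}^{\mathfrak{g}}_{\mathbb{Q}}$ be the $\mathbb{C}_q$-module of formal sums $\sum_{\lambda,\mu\in P_{\mathbb{Q}}}c_{\lambda,\mu}Y^\lambda X^\mu$ (infinitely many nonzero $c_{\lambda,\mu}\in\mathbb{C}_q$ allowed). For $\gamma=\begin{pmatrix} b & a\\ p & r\end{pmatrix}\in SL(2,\mathbb{Z})$ define the $\mathbb{C}_q$-linear map $\rho(\gamma)$ termwise on basis elements by $$\rho(\gamma)(Y^\lambda X^\mu)=q^{-(\mu,\mu)ab-2(\mu,\lambda)ap-(\lambda,\lambda)pr}\,Y^{r\lambda+a\mu}X^{p\lambda+b\mu},\qquad \lambda,\mu\in P_{\mathbb{Q}}.$$ Then $\hat{\mathcal{O}}^{\mathfrak{g}}_{\mathbb{Q}}$ forms a faithful representation of $SL(2,\mathbb{Z})$ under this action (in the sense of the context); in particular $\rho(\gamma)=\rho(\gamma')$ implies $\gamma=\gamma'$.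
   Context: $\mathbb{C}_q$ denotes the algebraic closure of $\mathbb{C}((q))$. $(\cdot,\cdot)$ is the invariant bilinear form on $\mathfrak{g}$, extended $\mathbb{Q}$-bilinearly to $P_{\mathbb{Q}}$; the coweights are identified with weights via this form. The symbols $Y^\lambda X^\mu$ are ordered monomials of the rational quantum torus with relations $X^\mu Y^\lambda=q^{-2(\mu,\lambda)}Y^\lambda X^\mu$ ($\mu,\lambda\in P_{\mathbb{Q}}$), forming a $\mathbb{C}_q$-basis of the algebra, and $\rho(\gamma)$ acts coefficientwise on formal sums. The action is a right action: $\rho(\gamma_1)\circ\rho(\gamma_2)=\rho(\gamma_2\gamma_1)$. *)

From HB Require Import structures.
From mathcomp Require Import all_boot all_order all_algebra.
Set Implicit Arguments. Unset Strict Implicit. Unset Printing Implicit Defensive.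
Import Order.TTheory GRing.Theory Num.Theory.
Local Open Scope ring_scope.

(* A simply laced semisimple Lie algebra of rank n is encoded by its Cartan
   matrix C: symmetric, 2 on the diagonal, 0 or -1 off the diagonal, positive
   definite (finite type), n >= 1. *)
Definition simply_laced_cartan (n : nat) (C : 'M[int]_n) : Prop :=
  (0 < n)%N /\
  (forall i, C i i = 2) /\
  (forall i j, i != j -> C i j = 0 \/ C i j = -1) /\
  (forall i j, C i j = C j i) /\
  (forall x : 'rV[rat]_n, x != 0 -> 0 < (x *m map_mx intr C *m x^T) 0 0).

(* P_Q = P (x) Q, in coordinates w.r.t. the fundamental weights. *)
Definition PQ (n : nat) := 'rV[rat]_n.

(* Invariant form on P_Q (normalized with (alpha,alpha)=2):
   (omega_i, omega_j) = (C^{-1})_{ij}. *)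
Definition form (n : nat) (C : 'M[int]_n) (x y : PQ n) : rat :=
  (x *m invmx (map_mx intr C) *m y^T) 0 0.

(* Formal sums  sum_{lambda,mu} c_{lambda,mu} Y^lambda X^mu  with arbitrary
   support: the coefficient function (lambda, mu) |-> c_{lambda,mu}. *)
Definition formal_sum (K : Type) (n : nat) := PQ n -> PQ n -> K.

Definition monomial (K : fieldType) (n : nat) (l m : PQ n) : formal_sum K n :=
  fun l' m' => if (l' == l) && (m' == m) then 1 else 0.

Definition SL2Z (g : 'M[int]_2) : Prop := \det g = 1.

Definition g_b (g : 'M[int]_2) : rat := (g 0 0)%:~R.
Definition g_a (g : 'M[int]_2) : rat := (g 0 1)%:~R.
Definition g_p (g : 'M[int]_2) : rat := (g 1 0)%:~R.
Definition g_r (g : 'M[int]_2) : rat := (g 1 1)%:~R.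

Definition rho_exp (n : nat) (C : 'M[int]_n) (g : 'M[int]_2) (l m : PQ n) : rat :=
  - (form C m m) * g_a g * g_b g - 2 * (form C m l) * g_a g * g_p g
  - (form C l l) * g_p g * g_r g.

(* For gamma in SL(2,Z) the map (l,m) |-> (r l + a m, p l + b m) is bijective
   with inverse (nu,ka) |-> (b nu - a ka, - p nu + r ka), so the coefficient of
   Y^nu X^ka in rho(gamma) f is q^{rho_exp l m} * f(l,m) for that preimage.
   [qpow s] stands for q^s. *)
Definition rho (K : fieldType) (n : nat) (C : 'M[int]_n) (qpow : rat -> K)
    (g : 'M[int]_2) (f : formal_sum K n) : formal_sum K n :=
  fun nu ka =>
    let l := g_b g *: nu - g_a g *: ka in
    let m := - (g_p g *: nu) + g_r g *: ka in
    qpow (rho_exp C g l m) * f l m.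

(* For gamma in SL(2,Z) the exponent of q in rho(gamma)(Y^l X^m) is the
   coboundary (l, m) - (l', m'), where Y^l' X^m' is the image monomial.  The
   exponents therefore telescope under composition, and since the index maps
   compose like adjugate matrices, rho(g1) o rho(g2) = rho(g2 g1).
   Faithfulness: rho(gamma) sends each monomial to a nonzero multiple of a
   monomial, so rho(gamma) determines the index map, hence gamma. *)

From Pilot Require Import Defs.
From mathcomp Require Import all_boot all_order all_algebra.
From mathcomp Require Import ring.
From Stdlib Require Import FunctionalExtensionality.
Import Order.TTheory GRing.Theory Num.Theory.
Local Open Scope ring_scope.
Set Implicit Arguments. Unset Strict Implicit.

(* The sesquilinear [form] of all_algebra would otherwise shadow [Defs.form]. *)
Local Notation form := Defs.form.

Lemma ord2P (i : 'I_2) : i = 0 \/ i = 1.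
Proof. by case: i => [[|[|//]] Hi]; [left | right]; apply/val_inj. Qed.

Lemma det_mx22 (R : comNzRingType) (A : 'M[R]_2) :
  \det A = A 0 0 * A 1 1 - A 0 1 * A 1 0.
Proof.
rewrite (expand_det_row _ 0) !big_ord_recl big_ord0 /cofactor !det_mx11 !mxE /=.
have -> : (lift 0 0 : 'I_2) = 1 by apply/val_inj.
have -> : (lift 1 0 : 'I_2) = 0 by apply/val_inj.
by rewrite /bump /= expr0 expr1; ring.
Qed.

Lemma mul_mx22E (R : pzSemiRingType) (A B : 'M[R]_2) i j :
  (A *m B) i j = A i 0 * B 0 j + A i 1 * B 1 j.
Proof.
rewrite !mxE !big_ord_recl big_ord0 addr0.
by have -> : (lift ord0 ord0 : 'I_2) = 1 by apply/val_inj.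
Qed.

Section EntriesOfProducts.
Variables g h : 'M[int]_2.

Lemma g_b_mul : g_b (g *m h) = g_b g * g_b h + g_a g * g_p h.
Proof. by rewrite /g_b /g_a /g_p mul_mx22E intrD !intrM. Qed.
Lemma g_a_mul : g_a (g *m h) = g_b g * g_a h + g_a g * g_r h.
Proof. by rewrite /g_b /g_a /g_r mul_mx22E intrD !intrM. Qed.
Lemma g_p_mul : g_p (g *m h) = g_p g * g_b h + g_r g * g_p h.
Proof. by rewrite /g_b /g_r /g_p mul_mx22E intrD !intrM. Qed.
Lemma g_r_mul : g_r (g *m h) = g_p g * g_a h + g_r g * g_r h.
Proof. by rewrite /g_a /g_r /g_p mul_mx22E intrD !intrM. Qed.

End EntriesOfProducts.

Lemma SL2Z_det (g : 'M[int]_2) : SL2Z g -> g_b g * g_r g - g_a g * g_p g = 1.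
Proof.
rewrite /SL2Z det_mx22 => /(congr1 (fun z : int => z%:~R : rat)).
by rewrite /= intrB !intrM.
Qed.

Section Form.
Variables (n : nat) (C : 'M[int]_n).

Lemma formDl x y z : form C (x + y) z = form C x z + form C y z.
Proof. by rewrite /form !mulmxDl mxE. Qed.
Lemma formDr x y z : form C z (x + y) = form C z x + form C z y.
Proof. by rewrite /form linearD /= mulmxDr mxE. Qed.
Lemma formZl c x z : form C (c *: x) z = c * form C x z.
Proof. by rewrite /form -!scalemxAl mxE. Qed.
Lemma formZr c x z : form C z (c *: x) = c * form C z x.
Proof. by rewrite /form linearZ /= -scalemxAr mxE. Qed.

Lemma formC : (forall i j, C i j = C j i) -> forall x y, form C x y = form C y x.
Proof.
move=> C_sym x y; have trE (A : 'M[rat]_1) : A 0 0 = A^T 0 0 by rewrite mxE.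
rewrite /form [LHS]trE !trmx_mul trmxK trmx_inv map_trmx.
have -> : C^T = C by apply/matrixP => i j; rewrite mxE C_sym.
by rewrite mulmxA.
Qed.

End Form.

(* Equations between index vectors are stated at type [PQ n] so that they
   rewrite inside the arguments of formal sums. *)
Section IndexMaps.
Variable n : nat.
Implicit Types (g : 'M[int]_2) (l m nu ka : PQ n).

Definition img_Y g l m := g_r g *: l + g_a g *: m.
Definition img_X g l m := g_p g *: l + g_b g *: m.
Definition pre_Y g nu ka := g_b g *: nu - g_a g *: ka.
Definition pre_X g nu ka := - (g_p g *: nu) + g_r g *: ka.

Lemma img_pre_Y g nu ka :
  SL2Z g -> img_Y g (pre_Y g nu ka) (pre_X g nu ka) = nu :> PQ n.
Proof.
move=> /SL2Z_det det_g; apply/rowP => i; rewrite !mxE.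
by rewrite -[RHS]mul1r -det_g; ring.
Qed.

Lemma img_pre_X g nu ka :
  SL2Z g -> img_X g (pre_Y g nu ka) (pre_X g nu ka) = ka :> PQ n.
Proof.
move=> /SL2Z_det det_g; apply/rowP => i; rewrite !mxE.
by rewrite -[RHS]mul1r -det_g; ring.
Qed.

Lemma pre_Y_mul g1 g2 nu ka :
  pre_Y g2 (pre_Y g1 nu ka) (pre_X g1 nu ka) = pre_Y (g2 *m g1) nu ka :> PQ n.
Proof.
by apply/rowP => i; rewrite /pre_Y /pre_X g_b_mul g_a_mul !mxE; ring.
Qed.

Lemma pre_X_mul g1 g2 nu ka :
  pre_X g2 (pre_Y g1 nu ka) (pre_X g1 nu ka) = pre_X (g2 *m g1) nu ka :> PQ n.
Proof.
by apply/rowP => i; rewrite /pre_X /pre_Y g_p_mul g_r_mul !mxE; ring.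
Qed.

Lemma pre_inj g1 g2 : (0 < n)%N ->
  (forall nu ka, pre_Y g1 nu ka = pre_Y g2 nu ka /\
                 pre_X g1 nu ka = pre_X g2 nu ka) ->
  g1 = g2.
Proof.
move=> n_gt0 eq_pre; pose i0 : 'I_n := Ordinal n_gt0; pose e : PQ n := const_mx 1.
have [/rowP/(_ i0) eq_b /rowP/(_ i0) eq_p] := eq_pre e 0.
have [/rowP/(_ i0) eq_a /rowP/(_ i0) eq_r] := eq_pre 0 e.
move: eq_b eq_p eq_a eq_r; rewrite !mxE !mulr1 !mulr0 ?subr0 ?sub0r ?addr0 ?add0r.
rewrite /g_b /g_a /g_p /g_r => /intr_inj eq_b /oppr_inj/intr_inj eq_p.
move=> /oppr_inj/intr_inj eq_a /intr_inj eq_r.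
by apply/matrixP => i j; case: (ord2P i) => ->; case: (ord2P j) => ->.
Qed.

End IndexMaps.

Lemma rho_exp_coboundary n (C : 'M[int]_n) g (l m : PQ n) :
  (forall i j, C i j = C j i) -> SL2Z g ->
  rho_exp C g l m = form C l m - form C (img_Y g l m) (img_X g l m).
Proof.
move=> C_sym /SL2Z_det det_g; rewrite /rho_exp /img_Y /img_X.
rewrite !(formDl, formDr, formZl, formZr) (formC C_sym m l).
have det_g' : g_b g * g_r g = 1 + g_a g * g_p g by rewrite -det_g; ring.
by ring: det_g'.
Qed.

Section Rho.
Variables (n : nat) (C : 'M[int]_n) (K : fieldType) (qpow : rat -> K).
Hypotheses (qpow0 : qpow 0 = 1) (qpowD : forall s t, qpow (s + t) = qpow s * qpow t).
Implicit Types (g : 'M[int]_2) (f : formal_sum K n).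

Lemma qpow_neq0 s : qpow s != 0.
Proof.
apply: contra_eq_neq (qpowD s (- s)) => ->.
by rewrite mul0r subrr qpow0 oner_neq0.
Qed.

Lemma rhoE g f nu ka : rho C qpow g f nu ka =
  qpow (rho_exp C g (pre_Y g nu ka) (pre_X g nu ka)) * f (pre_Y g nu ka) (pre_X g nu ka).
Proof. by []. Qed.

Lemma rho1 f : rho C qpow 1%:M f = f.
Proof.
apply: functional_extensionality => nu; apply: functional_extensionality => ka.
rewrite rhoE /rho_exp /pre_Y /pre_X /g_b /g_a /g_p /g_r !mxE /=.
by rewrite !scale1r !scale0r subr0 oppr0 add0r !mulr0 !subr0 qpow0 mul1r.
Qed.

Lemma rhoM g1 g2 f : (forall i j, C i j = C j i) -> SL2Z g1 -> SL2Z g2 ->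
  rho C qpow g1 (rho C qpow g2 f) = rho C qpow (g2 *m g1) f.
Proof.
move=> C_sym SL_g1 SL_g2.
apply: functional_extensionality => nu; apply: functional_extensionality => ka.
have SL_g21 : SL2Z (g2 *m g1) by rewrite /SL2Z det_mulmx SL_g1 SL_g2 mulr1.
rewrite !rhoE mulrA -qpowD !rho_exp_coboundary // !img_pre_Y // !img_pre_X //.
by rewrite pre_Y_mul pre_X_mul addrC addrA subrK.
Qed.

Lemma pre_eq_of_rho_eq g1 g2 :
  (forall f, rho C qpow g1 f = rho C qpow g2 f) ->
  forall nu ka : PQ n,
    pre_Y g1 nu ka = pre_Y g2 nu ka /\ pre_X g1 nu ka = pre_X g2 nu ka.
Proof.
move=> eq_rho nu ka.
have := congr1 (fun F => F nu ka) (eq_rho (monomial K (pre_Y g1 nu ka) (pre_X g1 nu ka))).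
rewrite /= !rhoE /monomial !eqxx mulr1.
case: ifP => [/andP[/eqP -> /eqP ->] // | _].
by rewrite mulr0 => /eqP; rewrite (negbTE (qpow_neq0 _)).
Qed.

End Rho.

Theorem mainTheorem4 (n : nat) (C : 'M[int]_n) (K : fieldType) (qpow : rat -> K) :
  simply_laced_cartan C ->
  qpow 0 = 1 ->
  (forall s t : rat, qpow (s + t) = qpow s * qpow t) ->
  (* identity acts trivially *)
  (forall f : formal_sum K n, rho C qpow 1%:M f = f) /\
  (* right action: rho(g1) o rho(g2) = rho(g2 g1) *)
  (forall g1 g2 : 'M[int]_2, SL2Z g1 -> SL2Z g2 ->
     forall f : formal_sum K n, rho C qpow g1 (rho C qpow g2 f) = rho C qpow (g2 *m g1) f) /\
  (* faithfulness *)
  (forall g1 g2 : 'M[int]_2, SL2Z g1 -> SL2Z g2 ->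
     (forall f : formal_sum K n, rho C qpow g1 f = rho C qpow g2 f) -> g1 = g2).
Proof.
move=> [n_gt0 [_ [_ [C_sym _]]]] qpow0 qpowD.
split; first exact: rho1.
split; first by move=> g1 g2 SL_g1 SL_g2 f; exact: rhoM.
move=> g1 g2 _ _ eq_rho; apply: pre_inj n_gt0 _.
exact: pre_eq_of_rho_eq eq_rho.
Qed.
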